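(* Let $G=(V,E)$ be a finite simple strongly connected directed graph and let $W\subsetneq V$ be a nonempty proper strongly connected subset. Then $\det(L_W)$ is an irreducible polynomial in the variables $(x_e)_{e\in E}$, $(y_v)_{v\in W}$ (over $\mathbb C$).
   Context: $x_e$ ($e\in E$) and $y_v$ ($v\in V$) are independent indeterminates. $Q$ is the $V\times V$ matrix with $Q_{vw}=x_e$ if $v\ne w$ and $e$ is an edge from $v$ to $w$ ($0$ if none), and $Q_{vv}=-\sum_{e:s(e)=v}x_e$. $L=Q+Y$ with $Y$ diagonal, $Y_{vv}=y_v$. $L_W$ is the principal submatrix of $L$ with rows and columns indexed by $W$. A subset $W$ is strongly connected if the induced subgraph $G_W$ is strongly connected. *)

From HB Require Import structures.
From mathcomp Require Import all_boot all_order all_algebra.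
Set Implicit Arguments. Unset Strict Implicit. Unset Printing Implicit Defensive.
Import GRing.Theory.
Local Open Scope ring_scope.

(* Multivariate polynomials in n variables over R, as iterated univariate
   polynomial rings: mpoly R 0 = R, mpoly R n.+1 = {poly mpoly R n}.
   Variable number k (k < n) is the indeterminate adjoined at level k.+1. *)
Fixpoint mpoly (R : idomainType) (n : nat) : idomainType :=
  match n with
  | 0 => R
  | m.+1 => ({poly mpoly R m} : idomainType)
  end.

Fixpoint mvar (R : idomainType) (n : nat) (k : nat) : mpoly R n :=
  match n return mpoly R n with
  | 0 => 0
  | m.+1 => if k == m then ('X : {poly mpoly R m}) else (mvar R m k)%:P
  end.

Definition irreducible_elt (R : idomainType) (p : R) : Prop :=
  [/\ p != 0, p \isn't a GRing.unit &
      forall a b : R, p = a * b -> a \is a GRing.unit \/ b \is a GRing.unit].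

Section Graph.
Variables (V : finType) (r : rel V) (W : {set V}).

(* edges of the digraph (no multi-edges since r is a relation) *)
Definition edge_pred : pred (V * V) := fun e => r e.1 e.2.
Definition Edge : finType := {e : V * V | edge_pred e}.
Definition Wpred : pred V := fun v => v \in W.
Definition Wvert : finType := {v : V | Wpred v}.

(* variable index set: the x_e (e in E) and the y_v (v in W) *)
Definition Var : finType := (Edge + Wvert)%type.

Definition PolyRing (C : idomainType) := mpoly C #|Var|.

Definition X (C : idomainType) (i : Var) : PolyRing C :=
  mvar C #|Var| (enum_rank i).

Definition xvar (C : idomainType) (v w : V) : PolyRing C :=
  if @insub _ edge_pred Edge (v, w) is Some e then X C (inl e) else 0.

Definition yvar (C : idomainType) (v : V) : PolyRing C :=
  if @insub _ Wpred Wvert v is Some u then X C (inr u) else 0.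

Definition Lentry (C : idomainType) (v w : V) : PolyRing C :=
  if v == w then yvar C v - \sum_(u | r v u) xvar C v u
  else xvar C v w.

Definition LW (C : idomainType) : 'M[PolyRing C]_#|W| :=
  \matrix_(i, j) Lentry C (enum_val i) (enum_val j).

End Graph.

Definition strongly_connected (V : finType) (r : rel V) : Prop :=
  forall u w : V, connect r u w.

Definition strongly_connected_set (V : finType) (r : rel V) (W : {set V}) : Prop :=
  forall u w : V, u \in W -> w \in W ->
    connect [rel a b | [&& a \in W, b \in W & r a b]] u w.

(* Write [P = det L_W] and measure polynomials by their degree in single
   variables. [P] has degree at most 1 in every variable, degree 1 in each
   [y_v] with [v \in W], and degree 0 in each [x_e] whose edge starts outside
   [W]. Let [P = f g]. If [f] is free of a variable [z2] and [g] of [z1], the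
   values of [P] on a 2x2 grid of substitutions for [(z1, z2)] form a rank-one
   matrix. Specialising [L_W] along a simple cycle through an edge [a -> b] of
   [W], or to a single edge [e] leaving [a], produces values violating this;
   hence the factor containing [y_a] also contains [y_b], and the other factor
   is free of every [x_e] leaving [a]. By strong connectivity of [W] one factor
   contains all the [y_v], so the other one involves no variable at all and is
   a unit. *)

From HB Require Import structures.
From mathcomp Require Import all_boot all_order all_algebra all_fingroup.
From mathcomp Require Import zify ring.
Set Implicit Arguments. Unset Strict Implicit. Unset Printing Implicit Defensive.
Import GRing.Theory.
Local Open Scope ring_scope.

Section VarDegree.
Variable R : idomainType.

Fixpoint vdeg (n k : nat) {struct n} : mpoly R n -> nat :=
  match n return mpoly R n -> nat with
  | 0 => fun _ => 0%N
  | m.+1 => fun p : {poly mpoly R m} =>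
      if k == m then (size p).-1 else \max_(i < size p) @vdeg m k p`_i
  end.
Arguments vdeg : clear implicits, simpl never.

Lemma vdeg_poly m k (p : {poly mpoly R m}) :
  vdeg m.+1 k p = if k == m then (size p).-1 else \max_(i < size p) vdeg m k p`_i.
Proof. by []. Qed.

Lemma vdeg0 n k : vdeg n k 0 = 0%N.
Proof. by case: n => [|m] //; rewrite vdeg_poly size_poly0 big_ord0; case: ifP. Qed.

Lemma vdeg_coef_le m k (p : {poly mpoly R m}) i :
  k != m -> (vdeg m k p`_i <= vdeg m.+1 k p)%N.
Proof.
move=> km; rewrite vdeg_poly (negbTE km).
have [lt_i|le_i] := ltnP i (size p); first exact: (leq_bigmax (Ordinal lt_i)).
by rewrite nth_default // vdeg0.
Qed.

Lemma vdeg_poly_le m k (p : {poly mpoly R m}) d : k != m ->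
  (forall i, vdeg m k p`_i <= d)%N -> (vdeg m.+1 k p <= d)%N.
Proof. by move=> km le_pd; rewrite vdeg_poly (negbTE km); apply/bigmax_leqP. Qed.

Lemma vdegC m k (c : mpoly R m) :
  vdeg m.+1 k c%:P = if k == m then 0%N else vdeg m k c.
Proof.
case: ifP => km; first by rewrite vdeg_poly km size_polyC; case: (c != 0).
apply/eqP; rewrite eqn_leq; apply/andP; split.
  by apply: vdeg_poly_le => [|i]; rewrite ?km // coefC; case: ifP; rewrite ?vdeg0.
by have := vdeg_coef_le c%:P 0 (negbT km); rewrite coefC eqxx.
Qed.

Lemma vdeg1 n k : vdeg n k 1 = 0%N.
Proof. by elim: n => [//|m IH]; rewrite vdegC IH; case: ifP. Qed.

Lemma vdeg_default n k (p : mpoly R n) : (n <= k)%N -> vdeg n k p = 0%N.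
Proof.
elim: n p => [//|m IH] p le_nk; rewrite vdeg_poly ifN; last by apply/eqP; lia.
by apply/eqP; rewrite -leqn0; apply/bigmax_leqP => i _; rewrite IH // ltnW.
Qed.

Lemma vdegN n k (p : mpoly R n) : vdeg n k (- p) = vdeg n k p.
Proof.
elim: n p => [//|m IH] p; rewrite !vdeg_poly size_polyN; case: ifP => // _.
by apply: eq_bigr => i _; rewrite coefN IH.
Qed.

Lemma vdegD_le n k (p q : mpoly R n) :
  (vdeg n k (p + q) <= maxn (vdeg n k p) (vdeg n k q))%N.
Proof.
elim: n p q => [//|m IH] p q.
have [->|km] := eqVneq k m.
  rewrite !vdeg_poly eqxx; have := size_polyD p q.
  by case: (size (p + q)) (size p) (size q) => [|a] [|b] [|c] /=; lia.
apply: vdeg_poly_le => // i; rewrite coefD; apply: leq_trans (IH _ _) _.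
by rewrite geq_max !leq_max !vdeg_coef_le ?orbT.
Qed.

Lemma vdegDl n k (p q : mpoly R n) :
  (vdeg n k q < vdeg n k p)%N -> vdeg n k (p + q) = vdeg n k p.
Proof.
move=> lt_qp; apply/eqP; rewrite eqn_leq; apply/andP; split.
  by apply: leq_trans (vdegD_le _ _ _) _; rewrite geq_max leqnn ltnW.
have := vdegD_le k (p + q) (- q); rewrite addrK vdegN; lia.
Qed.

Lemma vdeg_sum_le n k I (s : seq I) (P : pred I) (F : I -> mpoly R n) d :
  (forall i, P i -> vdeg n k (F i) <= d)%N ->
  (vdeg n k (\sum_(i <- s | P i) F i) <= d)%N.
Proof.
move=> le_Fd; apply: (big_ind (fun x => vdeg n k x <= d)%N) => //; first by rewrite vdeg0.
by move=> x y le_x le_y; apply: leq_trans (vdegD_le _ _ _) _; rewrite geq_max le_x.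
Qed.

Lemma vdeg_sum_lt n k I (s : seq I) (P : pred I) (F : I -> mpoly R n) d :
  (0 < d)%N -> (forall i, P i -> vdeg n k (F i) < d)%N ->
  (vdeg n k (\sum_(i <- s | P i) F i) < d)%N.
Proof.
move=> d_gt0 lt_Fd; apply: (big_ind (fun x => vdeg n k x < d)%N) => //; first by rewrite vdeg0.
by move=> x y lt_x lt_y; apply: leq_ltn_trans (vdegD_le _ _ _) _; rewrite gtn_max lt_x.
Qed.

(* The last coefficient of maximal [k]-degree; it plays the role of a leading coefficient. *)
Lemma vdeg_top_coef m k (p : {poly mpoly R m}) : k != m -> p != 0 ->
  exists i, [/\ p`_i != 0, vdeg m k p`_i = vdeg m.+1 k p &
    forall j, (i < j)%N -> p`_j != 0 -> (vdeg m k p`_j < vdeg m.+1 k p)%N].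
Proof.
move=> km p0; set D := vdeg m.+1 k p.
have top_ex : exists i, (p`_i != 0) && (vdeg m k p`_i == D).
  have [|i0 Di0] := eq_bigmax (fun i : 'I_(size p) => vdeg m k p`_i).
    by rewrite card_ord size_poly_gt0.
  have [pi0_0|pi0] := eqVneq p`_i0 0.
    exists (size p).-1; rewrite -lead_coefE lead_coef_eq0 p0 /= eqn_leq vdeg_coef_le //=.
    by rewrite /D vdeg_poly (negbTE km) Di0 pi0_0 vdeg0.
  by exists i0; rewrite pi0 /D vdeg_poly (negbTE km) Di0 eqxx.
have top_le i : (p`_i != 0) && (vdeg m k p`_i == D) -> (i <= size p)%N.
  by case/andP=> pi0 _; apply: ltnW; apply: contraR pi0; rewrite -leqNgt => /(nth_default 0) ->.
have [i /andP[pi0 /eqP Di] i_max] := ex_maxnP top_ex top_le.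
exists i; split=> // j lt_ij pj0; rewrite ltn_neqAle vdeg_coef_le // andbT.
by apply: contraTneq lt_ij => Dj; rewrite -leqNgt i_max // pj0 Dj /=.
Qed.

Lemma vdegM n k (p q : mpoly R n) : p != 0 -> q != 0 ->
  vdeg n k (p * q) = (vdeg n k p + vdeg n k q)%N.
Proof.
elim: n p q => [//|m IH] p q p0 q0.
have [->|km] := eqVneq k m.
  rewrite !vdeg_poly eqxx size_mul //.
  by move: p0 q0; rewrite -!size_poly_gt0; case: (size p); case: (size q) => //= *; lia.
have vdegM_le (a b : mpoly R m) : (vdeg m k (a * b) <= vdeg m k a + vdeg m k b)%N.
  have [->|a0] := eqVneq a 0; first by rewrite mul0r vdeg0.
  by have [->|b0] := eqVneq b 0; rewrite ?mulr0 ?vdeg0 ?IH.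
apply/eqP; rewrite eqn_leq; apply/andP; split.
  apply: vdeg_poly_le => // l; rewrite coefM; apply: vdeg_sum_le => j _.
  by apply: leq_trans (vdegM_le _ _) _; apply: leq_add; apply: vdeg_coef_le.
set Dp := vdeg _ k p; set Dq := vdeg _ k q.
have [->//|D_gt0] := posnP (Dp + Dq).
have [i [pi0 Di i_top]] := vdeg_top_coef km p0.
have [j [qj0 Dj j_top]] := vdeg_top_coef km q0.
apply: leq_trans (vdeg_coef_le (p * q) (i + j) km); rewrite coefM.
have lt_i : (i < (i + j).+1)%N by lia.
rewrite (bigD1 (Ordinal lt_i)) //= addKn vdegDl IH // Di Dj //.
apply: vdeg_sum_lt => // l; rewrite -val_eqE /= => li.
have [->|pl0] := eqVneq p`_l 0; first by rewrite mul0r vdeg0.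
have [->|ql0] := eqVneq q`_(i + j - l) 0; first by rewrite mulr0 vdeg0.
rewrite IH //; have lep := vdeg_coef_le p l km; have leq := vdeg_coef_le q (i + j - l) km.
case: (ltngtP l i) li => // [lt_li|lt_il] _.
  have lt_q : (vdeg m k q`_(i + j - l)%N < Dq)%N by apply: j_top ql0; lia.
  by rewrite -addnS leq_add.
have lt_p : (vdeg m k p`_l < Dp)%N by apply: i_top pl0.
by rewrite -addSn leq_add.
Qed.

Lemma vdegM_le n k (p q : mpoly R n) :
  (vdeg n k (p * q) <= vdeg n k p + vdeg n k q)%N.
Proof.
have [->|p0] := eqVneq p 0; first by rewrite mul0r vdeg0.
by have [->|q0] := eqVneq q 0; rewrite ?mulr0 ?vdeg0 ?vdegM.
Qed.

Lemma vdeg_prod_le n k I (s : seq I) (P : pred I) (F : I -> mpoly R n) :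
  (vdeg n k (\prod_(i <- s | P i) F i) <= \sum_(i <- s | P i) vdeg n k (F i))%N.
Proof.
apply: (big_ind2 (fun x y => vdeg n k x <= y)%N) => //; first by rewrite vdeg1.
by move=> a b c d le_a le_c; apply: leq_trans (vdegM_le _ _ _) (leq_add le_a le_c).
Qed.

Lemma vdeg_unit n k (u : mpoly R n) : u \is a GRing.unit -> vdeg n k u = 0%N.
Proof.
move=> uU; have u0 : u != 0 by apply: contraTneq uU => ->; rewrite unitr0.
have uV0 : u^-1 != 0 by rewrite invr_eq0.
have := vdegM k u0 uV0; rewrite mulrV // vdeg1; lia.
Qed.

Lemma vdeg_mvar n k j : (j < n)%N -> vdeg n k (mvar R n j) = (k == j).
Proof.
elim: n => [//|m IH] lt_jn /=; have [->|jm] := eqVneq j m.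
  have [->|km] := eqVneq k m; first by rewrite vdeg_poly eqxx size_polyX.
  rewrite vdeg_poly (negbTE km); apply/eqP; rewrite -leqn0; apply/bigmax_leqP => i _.
  by rewrite coefX; case: eqP; rewrite ?vdeg1 ?vdeg0.
rewrite vdegC IH; last by rewrite ltn_neqAle jm -ltnS.
by case: (eqVneq k m) => [->|//]; rewrite eq_sym (negbTE jm).
Qed.

End VarDegree.
Arguments vdeg {R} n k _.

Section Evaluation.
Variable R : idomainType.

Lemma commr_rmorph_com (A : nzRingType) (f : A -> R) (u : R) : commr_rmorph f u.
Proof. by move=> x; apply: mulrC. Qed.

Fixpoint meval (n : nat) (s : nat -> R) {struct n} : {rmorphism mpoly R n -> R} :=
  match n return {rmorphism mpoly R n -> R} with
  | 0 => (idfun : {rmorphism R -> R})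
  | m.+1 => (horner_morph (commr_rmorph_com (meval m s) (s m))
             : {rmorphism {poly mpoly R m} -> R})
  end.

Lemma meval_poly m s (p : {poly mpoly R m}) :
  meval m.+1 s p = (map_poly (meval m s) p).[s m].
Proof. by []. Qed.

Lemma meval_mvar n s j : (j < n)%N -> meval n s (mvar R n j) = s j.
Proof.
elim: n => [//|m IH] lt_jn.
have -> : mvar R m.+1 j = if j == m then 'X else (mvar R m j)%:P by [].
rewrite meval_poly; have [->|jm] := eqVneq j m; first by rewrite map_polyX hornerX.
by rewrite map_polyC hornerC; apply: IH; lia.
Qed.

Lemma meval_vdeg0 n k s s' (p : mpoly R n) : vdeg n k p = 0%N ->
  (forall j, (j < n)%N -> j != k -> s j = s' j) -> meval n s p = meval n s' p.
Proof.
elim: n k s s' p => [//|m IH] k s s' p p_k0 ss'; rewrite !meval_poly.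
have [km|km] := eqVneq k m.
  have sz_p : (size p <= 1)%N by move: p_k0; rewrite vdeg_poly km eqxx; case: (size p) => [|[]].
  rewrite (size1_polyC sz_p) !map_polyC !hornerC.
  apply: (IH m) => [|j lt_jm _]; first by rewrite vdeg_default.
  by apply: ss'; [rewrite ltnW | rewrite km neq_ltn lt_jm].
rewrite (ss' m) //; last by rewrite eq_sym.
suff -> : map_poly (meval m s) p = map_poly (meval m s') p by [].
apply/polyP => i; rewrite !coef_map.
apply: (IH k) => [|j lt_jm jk]; last by apply: ss' => //; rewrite ltnW.
by apply/eqP; rewrite -leqn0 -p_k0; apply: vdeg_coef_le.
Qed.

Lemma meval_mul_cross n (f g : mpoly R n) k1 k2 (s : R -> R -> nat -> R) a a' b b' :
  vdeg n k2 f = 0%N -> vdeg n k1 g = 0%N ->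
  (forall a b b' j, (j < n)%N -> j != k2 -> s a b j = s a b' j) ->
  (forall a a' b j, (j < n)%N -> j != k1 -> s a b j = s a' b j) ->
  meval n (s a b) (f * g) * meval n (s a' b') (f * g) =
  meval n (s a b') (f * g) * meval n (s a' b) (f * g).
Proof.
move=> f_k2 g_k1 s_b s_a; rewrite !rmorphM /=.
rewrite (meval_vdeg0 f_k2 (s_b a b b')) (meval_vdeg0 f_k2 (s_b a' b b')).
by rewrite (meval_vdeg0 g_k1 (s_a a a' b)) (meval_vdeg0 g_k1 (s_a a a' b')); ring.
Qed.

End Evaluation.
Arguments meval {R} n s.

Lemma mpoly_unit_vdeg0 (F : fieldType) n (g : mpoly F n) :
  g != 0 -> (forall k, (k < n)%N -> vdeg n k g = 0%N) -> g \is a GRing.unit.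
Proof.
elim: n g => [|m IH] g g0 g_const; first by rewrite unitfE.
have sz_g : size g = 1%N.
  have := g_const m (ltnSn m); rewrite vdeg_poly eqxx.
  by move: g0; rewrite -size_poly_eq0; case: (size g) => [|[]].
rewrite [_ \is a _]poly_unitE sz_g eqxx /=; apply: IH.
  have : lead_coef g != 0 by rewrite lead_coef_eq0.
  by rewrite lead_coefE sz_g.
move=> k lt_km; apply/eqP; rewrite -leqn0 -(g_const k (ltnW lt_km)).
by apply: vdeg_coef_le; rewrite neq_ltn lt_km.
Qed.

Section DeterminantSupport.
Variables (R : comNzRingType) (n : nat).

Lemma det_id_rows_except (A : 'M[R]_n) (a : 'I_n) :
  (forall i j, i != a -> A i j = (i == j)%:R) -> \det A = A a a.
Proof.
move=> A_id; rewrite /determinant (bigD1 1%g) //= [X in _ + X]big1 ?addr0 => [|s s1].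
  rewrite odd_perm1 mul1r (bigD1 a) //= big1 ?mulr1 ?perm1 // => i ia.
  by rewrite perm1 A_id // eqxx.
have [i [ia si]] : exists i, i != a /\ s i != i.
  have [i0 si0] : exists i0, s i0 != i0.
    apply/existsP; apply: contraR s1 => /existsPn s_id; apply/eqP/permP => i.
    by rewrite perm1; apply/eqP; rewrite -[_ == _]negbK s_id.
  have [i0a|i0a] := eqVneq i0 a; last by exists i0.
  by exists (s i0); split; [rewrite -i0a | apply: contra si0 => /eqP/perm_inj ->].
by rewrite (bigD1 i) //= A_id // eq_sym (negbTE si) mul0r mulr0.
Qed.

Lemma det_supp_diag_perm (A : 'M[R]_n) (p : 'S_n) : p != 1%g ->
  (forall s : 'S_n, (forall i, (s i == i) || (s i == p i)) -> (s == 1%g) || (s == p)) ->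
  (forall i j, j != i -> j != p i -> A i j = 0) ->
  \det A = \prod_i A i i + (-1) ^+ p * \prod_i A i (p i).
Proof.
move=> p1 supp_s A0; rewrite /determinant (bigD1 1%g) //= (bigD1 p) //=.
rewrite [X in _ + (_ + X)]big1 ?addr0 => [|s /andP[s1 sp]].
  by rewrite odd_perm1 mul1r; congr (_ + _); apply: eq_bigr => i _; rewrite perm1.
have [i /andP[si spi]] : exists i, (s i != i) && (s i != p i).
  apply/existsP; apply: contraR s1 => /existsPn s_supp.
  have := supp_s s; rewrite (negbTE sp) orbF; apply=> i.
  by move: (s_supp i); rewrite negb_and !negbK.
by rewrite (bigD1 i) //= A0 // mul0r mulr0.
Qed.

End DeterminantSupport.

Lemma edge_in_simple_cycle (T : finType) (e : rel T) u w : e u w -> connect e w u ->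
  exists c : seq T, [/\ uniq c, u \in c, next c u = w & path.cycle e c].
Proof.
move=> euw /connectP[p e_p u_last]; rewrite {}u_last in euw *.
case: (shortenP e_p) euw => p' e_p' uniq_p' _ euw.
exists (w :: p'); split => //; first exact: mem_last.
  by rewrite next_nth mem_last (index_last uniq_p') nth_default.
by rewrite /path.cycle rcons_path e_p' euw.
Qed.

Section CyclePerm.
Variables (T : finType) (W : {set T}) (w0 : T) (w0W : w0 \in W) (c : seq T).
Hypotheses (uniq_c : uniq c) (c_W : {subset c <= W}).
Hypothesis next_neq : forall x, x \in c -> next c x != x.

Lemma next_in_set x : x \in W -> next c x \in W.
Proof.
move=> xW; have [xc|xc] := boolP (x \in c); first by apply: c_W; rewrite mem_next.
by rewrite next_nth (negbTE xc).
Qed.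

Definition cycle_perm_fun (i : 'I_#|W|) : 'I_#|W| :=
  enum_rank_in w0W (next c (enum_val i)).

Lemma cycle_perm_fun_inj : injective cycle_perm_fun.
Proof.
move=> i j /(congr1 enum_val); rewrite !enum_rankK_in ?next_in_set ?enum_valP //.
by move/(can_inj (prev_next uniq_c))/enum_val_inj.
Qed.

Definition cycle_perm : 'S_#|W| := perm cycle_perm_fun_inj.

Lemma cycle_permE i : enum_val (cycle_perm i) = next c (enum_val i).
Proof. by rewrite permE enum_rankK_in // next_in_set // enum_valP. Qed.

Lemma cycle_perm_fix i : (cycle_perm i == i) = (enum_val i \notin c).
Proof.
apply/eqP/idP => [pi_i|ic]; last by apply: enum_val_inj; rewrite cycle_permE next_nth (negbTE ic).
by apply/negP => /next_neq; rewrite -cycle_permE pi_i eqxx.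
Qed.

Lemma cycle_perm_iter k i : enum_val (iter k cycle_perm i) = iter k (next c) (enum_val i).
Proof. by elim: k => [//|k IH] /=; rewrite cycle_permE IH. Qed.

(* Once [s] moves a point of [c], it is forced to move its successor too. *)
Lemma perm_in_cycle_supp (s : 'S_#|W|) :
  (forall i, (s i == i) || (s i == cycle_perm i)) -> (s == 1%g) || (s == cycle_perm).
Proof.
move=> s_supp; have [/existsP[i0 si0]|/existsPn s_id] := boolP [exists i, s i != i]; last first.
  by apply/orP; left; apply/eqP/permP => i; rewrite perm1; apply/eqP; rewrite -[_ == _]negbK s_id.
apply/orP; right; apply/eqP/permP => j.
have si0_pi : s i0 = cycle_perm i0 by move: (s_supp i0); rewrite (negbTE si0) => /eqP.
have i0c : enum_val i0 \in c.
  by rewrite -[_ \in _]negbK -cycle_perm_fix -si0_pi.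
have orbit_c k : enum_val (iter k cycle_perm i0) \in c.
  by rewrite cycle_perm_iter -(fconnect_cycle (cycle_next uniq_c) i0c) fconnect_iter.
have s_orbit k : s (iter k cycle_perm i0) = cycle_perm (iter k cycle_perm i0).
  elim: k => [//|k IH] /=; case/orP: (s_supp (cycle_perm (iter k cycle_perm i0))) => /eqP // s_fix.
  have := orbit_c k; rewrite -[_ \in _]negbK -cycle_perm_fix => /negP[].
  by apply/eqP/(@perm_inj _ s); rewrite s_fix IH.
have [jc|jc] := boolP (enum_val j \in c); last first.
  have pi_j : cycle_perm j = j by apply/eqP; rewrite cycle_perm_fix.
  by move: (s_supp j); rewrite pi_j orbb => /eqP.
have /iter_findex orbit_j : fconnect (next c) (enum_val i0) (enum_val j).
  by rewrite (fconnect_cycle (cycle_next uniq_c) i0c).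
have <- : iter (findex (next c) (enum_val i0) (enum_val j)) cycle_perm i0 = j.
  by apply: enum_val_inj; rewrite cycle_perm_iter.
exact: s_orbit.
Qed.

End CyclePerm.

Section LaplacianDet.
Variables (C : fieldType) (V : finType) (r : rel V) (W : {set V}).
Local Notation Var := (Var r W).
Local Notation n := #|Var|.
Local Notation P := (\det (LW r W C)).

Definition var_subst (phi : Var -> C) : nat -> C :=
  fun k => if insub k : option 'I_n is Some i then phi (enum_val i) else 0.

Lemma meval_X phi z : meval n (var_subst phi) (X C z) = phi z.
Proof. by rewrite /X meval_mvar // /var_subst valK enum_rankK. Qed.

Lemma var_subst_eq_off phi phi' z0 : (forall z, z != z0 -> phi z = phi' z) ->
  forall j, (j < n)%N -> j != enum_rank z0 -> var_subst phi j = var_subst phi' j.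
Proof.
move=> phi_eq j lt_jn j_z0; rewrite /var_subst insubT /=; apply: phi_eq.
by apply: contra j_z0 => /eqP <-; rewrite enum_valK.
Qed.

Definition graph_val (fx : V -> V -> C) (fy : V -> C) (z : Var) : C :=
  match z with inl e => fx (val e).1 (val e).2 | inr v => fy (val v) end.

Definition Lmx (fx : V -> V -> C) (fy : V -> C) : 'M[C]_#|W| :=
  \matrix_(i, j) let v := enum_val i in let w := enum_val j in
    if v == w then fy v - \sum_(u | r v u) fx v u
    else if r v w then fx v w else 0.

Lemma meval_xvar fx fy v w :
  meval n (var_subst (graph_val fx fy)) (xvar r W C v w) = if r v w then fx v w else 0.
Proof.
rewrite /xvar -[r v w]/(edge_pred r (v, w)); case: insubP => [e -> ve|/negbTE ->].
  by rewrite meval_X /= ve.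
by rewrite rmorph0.
Qed.

Lemma meval_yvar fx fy v :
  meval n (var_subst (graph_val fx fy)) (yvar r W C v) = if v \in W then fy v else 0.
Proof.
rewrite /yvar -[v \in W]/(Wpred W v); case: insubP => [u -> uv|/negbTE ->].
  by rewrite meval_X /= uv.
by rewrite rmorph0.
Qed.

Lemma meval_detLW fx fy : meval n (var_subst (graph_val fx fy)) P = \det (Lmx fx fy).
Proof.
rewrite -det_map_mx; congr (\det _); apply/matrixP => i j; rewrite !mxE /Lentry.
case: eqP => _; last by rewrite meval_xvar.
rewrite rmorphB rmorph_sum /= meval_yvar enum_valP; congr (_ - _).
by apply: eq_bigr => u ru; rewrite meval_xvar ru.
Qed.

Definition var_src (z : Var) : V :=
  match z with inl e => (val e).1 | inr v => val v end.

Lemma vdeg_X (z z' : Var) : vdeg n (enum_rank z) (X C z') = (z == z').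
Proof. by rewrite /X vdeg_mvar // val_eqE (inj_eq enum_rank_inj). Qed.

Lemma vdeg_Lentry (z : Var) v w :
  (vdeg n (enum_rank z) (Lentry r W C v w) <= (v == var_src z))%N.
Proof.
have vdeg_xvar w' : (vdeg n (enum_rank z) (xvar r W C v w') <= (v == var_src z))%N.
  rewrite /xvar; case: insubP => [e _ ve|_]; last by rewrite vdeg0.
  by rewrite vdeg_X; case: eqP => // ->; rewrite /= ve eqxx.
rewrite /Lentry; case: eqP => _ //; apply: leq_trans (vdegD_le _ _ _) _.
rewrite geq_max vdegN vdeg_sum_le // /yvar; case: insubP => [u _ uv|_]; last by rewrite vdeg0.
by rewrite vdeg_X; case: eqP => // ->; rewrite /= uv eqxx.
Qed.

Lemma vdeg_detLW (z : Var) :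
  (vdeg n (enum_rank z) P <= \sum_(i < #|W|) (enum_val i == var_src z))%N.
Proof.
rewrite /determinant; apply: vdeg_sum_le => s _; apply: leq_trans (vdegM_le _ _ _) _.
have -> : vdeg n (enum_rank z) ((-1) ^+ s : PolyRing r W C) = 0%N.
  by case: (odd_perm s); rewrite ?expr0 ?expr1 ?vdegN vdeg1.
rewrite add0n; apply: leq_trans (vdeg_prod_le _ _ _ _) _.
by apply: leq_sum => i _; rewrite mxE vdeg_Lentry.
Qed.

Lemma vdeg_detLW_le1 (z : Var) : (vdeg n (enum_rank z) P <= 1)%N.
Proof.
apply: leq_trans (vdeg_detLW z) _; have [zW|zW] := boolP (var_src z \in W).
  rewrite (bigD1 (enum_rank_in zW (var_src z))) //= enum_rankK_in // eqxx big1 // => i.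
  move=> ne_i; apply/eqP; rewrite eqb0; apply: contra ne_i => /eqP i_z.
  by apply/eqP/enum_val_inj; rewrite enum_rankK_in.
by rewrite big1 // => i _; apply/eqP; rewrite eqb0; apply: contra zW => /eqP <-; apply: enum_valP.
Qed.

Lemma vdeg_detLW_out (z : Var) : var_src z \notin W -> vdeg n (enum_rank z) P = 0%N.
Proof.
move=> zW; apply/eqP; rewrite -leqn0; apply: leq_trans (vdeg_detLW z) _.
by rewrite big1 // => i _; apply/eqP; rewrite eqb0; apply: contra zW => /eqP <-; apply: enum_valP.
Qed.

Lemma det_Lmx_y v (vW : v \in W) t :
  \det (Lmx (fun _ _ => 0) (fun x => if x == v then t else 1)) = t.
Proof.
pose a := enum_rank_in vW v; have a_v : enum_val a = v by rewrite enum_rankK_in.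
rewrite (det_id_rows_except (a := a)) => [|i j ia]; rewrite mxE /=.
  by rewrite a_v !eqxx big1 ?subr0.
have iv : enum_val i != v by apply: contra ia => /eqP iv; apply/eqP/enum_val_inj; rewrite a_v.
rewrite (inj_eq enum_val_inj); case: eqP => _; last by case: ifP.
by rewrite (negbTE iv) big1 ?subr0.
Qed.

Lemma det_Lmx_edge a b (aW : a \in W) (rab : r a b) s t :
  \det (Lmx (fun x y => if (x == a) && (y == b) then t else 0)
           (fun x => if x == a then s else 1)) = s - t.
Proof.
pose ia := enum_rank_in aW a; have ia_a : enum_val ia = a by rewrite enum_rankK_in.
rewrite (det_id_rows_except (a := ia)) => [|i j iia]; rewrite mxE /=.
  rewrite ia_a !eqxx (bigD1 b) //= !eqxx big1 ?addr0 // => u /andP[_ ub].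
  by rewrite (negbTE ub).
have ia' : enum_val i != a by apply: contra iia => /eqP ia'; apply/eqP/enum_val_inj; rewrite ia_a.
rewrite (inj_eq enum_val_inj) (negbTE ia') /=; case: eqP => _; last by case: ifP.
by rewrite big1 ?subr0.
Qed.

Section CycleEvaluation.
Variables (c : seq V) (a b : V) (aW : a \in W).
Hypotheses (uniq_c : uniq c) (c_W : {subset c <= W}).
Hypotheses (r_next : forall x, x \in c -> r x (next c x)).
Hypotheses (next_neq : forall x, x \in c -> next c x != x).
Hypotheses (ac : a \in c) (bc : b \in c) (ab : a != b).

Definition fx_cycle (x y : V) : C := if (x \in c) && (y == next c x) then 1 else 0.

(* The diagonal entries of [Lmx] become [s - 1], [t - 1] at [a], [b] and [1] elsewhere. *)
Definition fy_cycle (s t : C) (x : V) : C :=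
  if x == a then s else if x == b then t else 1 + (x \in c)%:R.

Lemma sum_fx_cycle x : \sum_(y | r x y) fx_cycle x y = (x \in c)%:R.
Proof.
have [xc|xc] := boolP (x \in c); last by rewrite big1 // => y _; rewrite /fx_cycle (negbTE xc).
rewrite (bigD1 (next c x)) ?r_next //= /fx_cycle xc eqxx big1 ?addr0 // => y /andP[_ ny].
by rewrite (negbTE ny).
Qed.

Local Notation pi := (cycle_perm aW uniq_c c_W).

Lemma det_Lmx_cycle s t :
  \det (Lmx fx_cycle (fy_cycle s t)) = (s - 1) * (t - 1) + (-1) ^+ pi.
Proof.
pose ia := enum_rank_in aW a; pose ib := enum_rank_in aW b.
have ia_a : enum_val ia = a by rewrite enum_rankK_in.
have ib_b : enum_val ib = b by rewrite enum_rankK_in ?c_W.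
have iab : ia != ib by apply: contra ab => /eqP iab; rewrite -ia_a -ib_b iab.
have pi_fix i : (pi i == i) = (enum_val i \notin c) by apply: cycle_perm_fix.
have diag i : enum_val i \notin [:: a; b] -> Lmx fx_cycle (fy_cycle s t) i i = 1.
  rewrite !inE negb_or => /andP[ia' ib']; rewrite mxE /= eqxx sum_fx_cycle /fy_cycle.
  by rewrite (negbTE ia') (negbTE ib') addrK.
rewrite (det_supp_diag_perm (p := pi)).
- congr (_ + _); last first.
    rewrite big1 ?mulr1 // => i _; have [ic|ic] := boolP (enum_val i \in c).
      have pi_i : enum_val (pi i) != enum_val i by rewrite (inj_eq enum_val_inj) pi_fix ic.
      by rewrite mxE /= eq_sym (negbTE pi_i) cycle_permE r_next // /fx_cycle ic eqxx.
    have /eqP -> : pi i == i by rewrite pi_fix.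
    by rewrite diag // !inE; apply: contra ic => /orP[] /eqP ->.
  rewrite (bigD1 ia) // (bigD1 ib) 1?eq_sym //= big1 ?mulr1 => [|i /andP[iia iib]].
    by rewrite !mxE /= !eqxx !sum_fx_cycle ia_a ib_b /fy_cycle eqxx eq_sym (negbTE ab) eqxx ac bc.
  by apply: diag; rewrite !inE -ia_a -ib_b !(inj_eq enum_val_inj) negb_or iia.
- by apply: contraTneq ac => pi1; rewrite -ia_a -pi_fix pi1 perm1 eqxx.
- exact: perm_in_cycle_supp.
- move=> i j ji jpi; rewrite mxE /= (inj_eq enum_val_inj) eq_sym (negbTE ji) /fx_cycle.
  by rewrite -(cycle_permE aW uniq_c c_W) (inj_eq enum_val_inj) (negbTE jpi) andbF; case: ifP.
Qed.

End CycleEvaluation.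

(* Junk value [0] when [v \notin W]. *)
Definition yidx (v : V) : nat :=
  if insub v : option (Wvert W) is Some u then enum_rank (inr u : Var) else 0%N.

Lemma yidxE v (vW : v \in W) : yidx v = enum_rank (inr (Sub v vW) : Var).
Proof. by rewrite /yidx insubT. Qed.

Lemma graph_subst_eq_off_y {fx} fy fy' v : v \in W -> (forall x, x != v -> fy x = fy' x) ->
  forall j, (j < n)%N -> j != yidx v ->
  var_subst (graph_val fx fy) j = var_subst (graph_val fx fy') j.
Proof.
move=> vW fy_eq; rewrite (yidxE vW); apply: var_subst_eq_off => -[e|u] //= uv; apply: fy_eq.
by apply: contra uv => /eqP u_v; apply/eqP; congr inr; apply: val_inj.
Qed.

Lemma graph_subst_eq_off_x fx fx' {fy} (e : Edge r) :
  (forall x y, (x, y) != val e -> fx x y = fx' x y) ->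
  forall j, (j < n)%N -> j != enum_rank (inl e : Var) ->
  var_subst (graph_val fx fy) j = var_subst (graph_val fx' fy) j.
Proof.
move=> fx_eq; apply: var_subst_eq_off => -[e'|u] //= e'e; apply: fx_eq.
apply: contra e'e => /eqP e'_e; apply/eqP; congr inl; apply: val_inj.
by rewrite -e'_e -surjective_pairing.
Qed.

Lemma vdeg_detLW_y v : v \in W -> (0 < vdeg n (yidx v) P)%N.
Proof.
move=> vW; rewrite lt0n; apply: contraTneq isT => P_y0.
pose fy t x : C := if x == v then t else 1.
have fy_eq x : x != v -> fy 0 x = fy 1 x by move/negbTE; rewrite /fy => ->.
have := meval_vdeg0 P_y0 (graph_subst_eq_off_y (fx := fun _ _ => 0) vW fy_eq).
by rewrite !meval_detLW !det_Lmx_y // => /eqP; rewrite eq_sym oner_eq0.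
Qed.

Lemma detLW_neq0 : W != set0 -> P != 0.
Proof.
case/set0Pn=> v vW; apply: contraTneq (vdeg_detLW_y vW) => ->.
by rewrite vdeg0.
Qed.

End LaplacianDet.

Section Factorization.
Variables (C : fieldType) (V : finType) (r : rel V) (W : {set V}).
Hypotheses (r_irr : irreflexive r) (W_sc : strongly_connected_set r W) (W0 : W != set0).
Local Notation Var := (Var r W).
Local Notation n := #|Var|.
Local Notation P := (\det (LW r W C)).
Variables (f g : PolyRing r W C).
Hypothesis P_fg : P = f * g.

Lemma vdeg_factor k : vdeg n k P = (vdeg n k f + vdeg n k g)%N.
Proof.
have P0 := detLW_neq0 C r W0.
have f0 : f != 0 by apply: contraNneq P0 => f0; rewrite P_fg f0 mul0r.
have g0 : g != 0 by apply: contraNneq P0 => g0; rewrite P_fg g0 mulr0.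
by rewrite P_fg vdegM.
Qed.

Lemma vdeg_factor_le1 (z : Var) :
  (vdeg n (enum_rank z) f + vdeg n (enum_rank z) g <= 1)%N.
Proof. by rewrite -vdeg_factor vdeg_detLW_le1. Qed.

Lemma vdeg_factor_y_edge a b : a \in W -> b \in W -> r a b ->
  (0 < vdeg n (yidx r W a) f)%N -> (0 < vdeg n (yidx r W b) f)%N.
Proof.
move=> aW bW rab f_a; rewrite lt0n; apply/negP => /eqP f_b.
have g_a : vdeg n (yidx r W a) g = 0%N.
  by have := vdeg_factor_le1 (inr (Sub a aW)); rewrite -yidxE; lia.
pose rW := [rel x y | [&& x \in W, y \in W & r x y]].
have rW_ab : rW a b by rewrite /= aW bW rab.
have [c [uniq_c ac next_a cyc]] := @edge_in_simple_cycle _ rW a b rW_ab (W_sc bW aW).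
have c_W : {subset c <= W} by move=> x /(next_cycle cyc) /and3P[].
have r_next x : x \in c -> r x (next c x) by move=> /(next_cycle cyc) /and3P[].
have next_neq x : x \in c -> next c x != x.
  by move/r_next; apply: contraTneq => ->; rewrite r_irr.
have bc : b \in c by rewrite -next_a mem_next.
have ab : a != b by apply: contraTneq rab => ->; rewrite r_irr.
pose sub (s t : C) := var_subst (graph_val (fx_cycle C c) (fy_cycle c a b s t) : Var -> C).
have P_st s t :
    meval n (sub s t) P = (s - 1) * (t - 1) + (-1) ^+ cycle_perm aW uniq_c c_W.
  by rewrite meval_detLW det_Lmx_cycle.
have sub_t s t t' j : (j < n)%N -> j != yidx r W b -> sub s t j = sub s t' j.
  have fy_eq x : x != b -> fy_cycle c a b s t x = fy_cycle c a b s t' x.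
    by move/negbTE=> xb; rewrite /fy_cycle xb.
  exact: graph_subst_eq_off_y bW fy_eq j.
have sub_s s s' t j : (j < n)%N -> j != yidx r W a -> sub s t j = sub s' t j.
  have fy_eq x : x != a -> fy_cycle c a b s t x = fy_cycle c a b s' t x.
    by move/negbTE=> xa; rewrite /fy_cycle xa.
  exact: graph_subst_eq_off_y aW fy_eq j.
have := meval_mul_cross 1 2 1 2 f_b g_a sub_t sub_s; rewrite -P_fg !P_st.
set eps := (-1) ^+ _ => cross.
(* On [{1, 2}^2] the values of [P] form the matrix [[eps, eps], [eps, 1 + eps]],
   whose determinant [eps] is nonzero. *)
have : ((1 - 1) * (1 - 1) + eps) * ((2 - 1) * (2 - 1) + eps)
       - ((1 - 1) * (2 - 1) + eps) * ((2 - 1) * (1 - 1) + eps) = eps :> C by ring.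
by rewrite cross subrr => /esym/eqP; rewrite signr_eq0.
Qed.

Lemma vdeg_factor_x (e : Edge r) : (val e).1 \in W ->
  (0 < vdeg n (yidx r W (val e).1) f)%N -> vdeg n (enum_rank (inl e : Var)) g = 0%N.
Proof.
move=> aW f_a; apply/eqP; rewrite -leqn0 leqNgt; apply/negP => g_e.
have f_e : vdeg n (enum_rank (inl e : Var)) f = 0%N by have := vdeg_factor_le1 (inl e); lia.
set a := (val e).1 in aW f_a; set b := (val e).2.
have g_a : vdeg n (yidx r W a) g = 0%N.
  by have := vdeg_factor_le1 (inr (Sub a aW)); rewrite -yidxE; lia.
have rab : r a b := valP e.
have e_ab : val e = (a, b) by rewrite /a /b; case: (val e).
pose sub (s t : C) := var_subst (graph_val (fun x y => if (x == a) && (y == b) then t else 0)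
                                            (fun x => if x == a then s else 1) : Var -> C).
have P_st s t : meval n (sub s t) P = s - t by rewrite meval_detLW det_Lmx_edge.
have sub_t s t t' j : (j < n)%N -> j != enum_rank (inl e : Var) -> sub s t j = sub s t' j.
  have fx_eq x y : (x, y) != val e ->
      (if (x == a) && (y == b) then t else 0) = (if (x == a) && (y == b) then t' else 0).
    by rewrite e_ab xpair_eqE => /negbTE ->.
  exact: graph_subst_eq_off_x fx_eq j.
have sub_s s s' t j : (j < n)%N -> j != yidx r W a -> sub s t j = sub s' t j.
  have fy_eq x : x != a -> (if x == a then s else 1) = (if x == a then s' else 1 : C).
    by move/negbTE=> ->.
  exact: graph_subst_eq_off_y aW fy_eq j.
(* On [{0, 1}^2] the values [s - t] of [P] form a matrix of determinant [1]. *)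
have := meval_mul_cross 0 1 0 1 f_e g_a sub_t sub_s; rewrite -P_fg !P_st.
by rewrite !subr0 !sub0r subrr mul0r mulr1 => /eqP; rewrite eq_sym oppr_eq0 oner_eq0.
Qed.

Lemma vdeg_factor_y v0 v : v0 \in W -> v \in W ->
  (0 < vdeg n (yidx r W v0) f)%N -> (0 < vdeg n (yidx r W v) f)%N.
Proof.
move=> v0W vW; have /connectP[p p_path ->] := W_sc v0W vW; clear vW.
elim: p v0 v0W p_path => [//|x p IH] v0 v0W /= /andP[/and3P[_ xW rv0x] p_path] f_v0.
exact: IH xW p_path (vdeg_factor_y_edge v0W xW rv0x f_v0).
Qed.

Lemma factor_unit v0 : v0 \in W -> (0 < vdeg n (yidx r W v0) f)%N -> g \is a GRing.unit.
Proof.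
move=> v0W f_v0; apply: mpoly_unit_vdeg0 => [|k lt_kn].
  by apply: contraTneq (vdeg_detLW_y C r v0W) => g0; rewrite P_fg g0 mulr0 vdeg0.
have -> : k = enum_rank (enum_val (Ordinal lt_kn)) by rewrite enum_valK.
case: (enum_val _) => [e|u].
  have [aW|aW] := boolP ((val e).1 \in W); first exact/vdeg_factor_x/(vdeg_factor_y v0W aW).
  by have := vdeg_detLW_out C (z := inl e) aW; rewrite vdeg_factor; lia.
have := vdeg_factor_le1 (inr u); have := vdeg_factor_y v0W (valP u) f_v0.
by rewrite /yidx valK; lia.
Qed.

End Factorization.

Theorem detLW_irreducible (C : fieldType) (V : finType) (r : rel V) (W : {set V}) :
  irreflexive r -> W != set0 -> strongly_connected_set r W ->
  irreducible_elt (\det (LW r W C)).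
Proof.
move=> r_irr W0 W_sc; have /set0Pn[v0 v0W] := W0; have P_y := vdeg_detLW_y C r v0W.
split=> [||f g P_fg]; first exact: detLW_neq0.
  by apply/negP => /(vdeg_unit (yidx r W v0)) P_y0; rewrite P_y0 in P_y.
have := P_y; rewrite (vdeg_factor W0 P_fg).
have [f_y0|f_y] := posnP (vdeg _ (yidx r W v0) f); last first.
  by right; apply: (factor_unit r_irr W_sc W0 P_fg v0W f_y).
rewrite f_y0 add0n => g_y; left; rewrite mulrC in P_fg.
exact: (factor_unit r_irr W_sc W0 P_fg v0W g_y).
Qed.

Theorem lemma4p1 (C : closedFieldType) (hC : [pchar C] =i pred0)
  (V : finType) (r : rel V) (W : {set V}) :
  irreflexive r ->
  strongly_connected r ->
  W != set0 -> W != [set: V] ->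
  strongly_connected_set r W ->
  irreducible_elt (\det (LW r W C)).
Proof. by move=> r_irr _ W0 _ W_sc; apply: detLW_irreducible. Qed.
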